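(* Let $S$ be a reflective numerical semigroup with $\mathrm{g}(S)=g\ge1$ and $\mathrm{m}(S)=a$. Then: $S$ is symmetric if and only if $g\equiv1\pmod a$; $S$ is pseudo-symmetric if and only if $g\equiv2\pmod a$; and $S$ is irreducible if and only if $g\equiv 1$ or $g\equiv 2\pmod a$.
   Context: A numerical semigroup is a submonoid $S$ of $(\mathbb{N}_0,+)$ with finite complement; $\mathrm{g}(S)$ is the number of its gaps (elements of $\mathbb{N}_0\setminus S$), $\mathrm{F}(S)$ its largest gap, and $\mathrm{m}(S)$ its smallest positive element. $S$ is symmetric if for every $z\in\mathbb{Z}$ exactly one of $z$ and $\mathrm{F}(S)-z$ lies in $S$. $S$ is pseudo-symmetric if $\mathrm{F}(S)$ is even and for every $z\in\mathbb{Z}\setminus\{\mathrm{F}(S)/2\}$ exactly one of $z$ and $\mathrm{F}(S)-z$ lies in $S$. $S$ is irreducible if it is not the intersection of two numerical semigroups properly containing $S$. A numerical semigroup $S$ of genus $g\ge1$ is called reflective if for every $z\in\{0,1,\dots,g-1\}$ exactly one of $z$ and $z+g$ belongs to $S$. *)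

From mathcomp Require Import all_boot all_order all_algebra.
Set Implicit Arguments. Unset Strict Implicit. Unset Printing Implicit Defensive.
Import GRing.Theory Num.Theory.

Record numsg := NumSg {
  nsg_mem :> pred nat;
  nsg_c : nat;
  nsg_0 : nsg_mem 0;
  nsg_add : forall x y, nsg_mem x -> nsg_mem y -> nsg_mem (x + y);
  nsg_cofin : forall n, nsg_c <= n -> nsg_mem n
}.

Definition memZ (S : numsg) (z : int) : bool := (0 <= z)%R && S `|z|%N.

(* genus: number of gaps (all gaps are < nsg_c S) *)
Definition genus (S : numsg) : nat := count (fun n => ~~ S n) (iota 0 (nsg_c S)).

(* Frobenius number: the largest gap (-1 if there is no gap) *)
Definition frob (S : numsg) : int :=
  ((\max_(n < nsg_c S | ~~ S n) n.+1)%:Z - 1)%R.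

Lemma mult_ex (S : numsg) : exists n, (0 < n) && S n.
Proof. exists (nsg_c S).+1; rewrite ltn0Sn /=; apply: nsg_cofin; exact: leqnSn. Qed.

Definition mult (S : numsg) : nat := ex_minn (mult_ex S).

Definition symmetric_nsg (S : numsg) : Prop :=
  forall z : int, memZ S z != memZ S (frob S - z)%R.

Definition pseudo_symmetric_nsg (S : numsg) : Prop :=
  (2 %| frob S)%Z /\
  forall z : int, z != (frob S %/ 2)%Z -> memZ S z != memZ S (frob S - z)%R.

Definition proper_sub (S T : numsg) : Prop :=
  (forall n, S n -> T n) /\ exists n, T n && ~~ S n.

Definition irreducible_nsg (S : numsg) : Prop :=
  ~ exists T1 T2 : numsg,
      [/\ proper_sub S T1, proper_sub S T2 & forall n, S n = T1 n && T2 n].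

Definition reflective_nsg (S : numsg) : Prop :=
  1 <= genus S /\ forall z, z < genus S -> S z != S (z + genus S).

From Pilot Require Import Defs.
From mathcomp Require Import all_boot all_order all_algebra.
From mathcomp Require Import zify.
Set Implicit Arguments. Unset Strict Implicit.

Import GRing.Theory Num.Theory.

(* Reflectivity pins down S completely: below the genus g its elements are the
   multiples of a = m(S), on [g, 2g) an integer x lies in S iff x - g does not,
   and beyond 2g there are no gaps.  Writing g = ka + r + 1 (so r + 1 < a, as a
   does not divide the gap g), the Frobenius number is F = g + ka and n |-> F - n
   exchanges elements and gaps everywhere except on the block ka < n < g of r
   consecutive gaps.  Hence S is symmetric iff this block is empty (r = 0) and
   pseudo-symmetric iff it is the single point F/2 (r = 1); for r >= 2 both
   S u {F} and S u {g - 1} are semigroups, and they meet in S. *)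

Section NumericalSemigroup.
Variable S : numsg.

Lemma mult_gt0 : 0 < mult S.
Proof. by rewrite /mult; case: ex_minnP => m /andP[]. Qed.

Lemma mem_mult : S (mult S).
Proof. by rewrite /mult; case: ex_minnP => m /andP[]. Qed.

Lemma mult_min n : 0 < n -> S n -> mult S <= n.
Proof. by move=> n_gt0 Sn; rewrite /mult; case: ex_minnP => m _; apply; rewrite n_gt0. Qed.

Lemma mem_muln x k : S x -> S (x * k).
Proof.
move=> Sx; elim: k => [|k IHk]; first by rewrite muln0 nsg_0.
by rewrite mulnS nsg_add.
Qed.

Lemma mem_dvd_mult n : mult S %| n -> S n.
Proof. by case/dvdnP=> k ->; rewrite mulnC mem_muln ?mem_mult. Qed.

End NumericalSemigroup.

Section Adjoin.
Variables (S : numsg) (h : nat).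
Hypotheses (add_h : forall s, S s -> 0 < s -> S (h + s)) (double_h : S (h + h)).

Definition adjoin_pred : pred nat := fun n => S n || (n == h).

Lemma adjoin_pred0 : adjoin_pred 0.
Proof. by rewrite /adjoin_pred nsg_0. Qed.

Lemma adjoin_pred_add x y : adjoin_pred x -> adjoin_pred y -> adjoin_pred (x + y).
Proof.
rewrite /adjoin_pred => /orP[Sx|/eqP->] /orP[Sy|/eqP->]; first by rewrite nsg_add.
- have [->|x_gt0] := posnP x; first by rewrite eqxx orbT.
  by rewrite addnC add_h.
- have [->|y_gt0] := posnP y; first by rewrite addn0 eqxx orbT.
  by rewrite add_h.
- by rewrite double_h.
Qed.

Lemma adjoin_pred_cofin n : nsg_c S <= n -> adjoin_pred n.
Proof. by move=> le_cn; rewrite /adjoin_pred nsg_cofin. Qed.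

Definition nsg_adjoin : numsg :=
  NumSg adjoin_pred0 adjoin_pred_add adjoin_pred_cofin.

Lemma proper_sub_adjoin : ~~ S h -> Defs.proper_sub S nsg_adjoin.
Proof.
move=> nSh; split=> [n Sn|]; first by rewrite /= /adjoin_pred Sn.
by exists h; rewrite /= /adjoin_pred eqxx orbT nSh.
Qed.

End Adjoin.

Section Frobenius.
Variables (S : numsg) (F : nat).
Hypotheses (gap_F : ~~ S F) (gap_le_F : forall n, ~~ S n -> n <= F).

Lemma mem_gt_F n : F < n -> S n.
Proof. by move=> lt_Fn; apply: contraT => /gap_le_F; rewrite leqNgt lt_Fn. Qed.

Lemma frobE : frob S = F.
Proof.
have lt_Fc : F < nsg_c S by rewrite ltnNge; apply: contra gap_F; apply: nsg_cofin.
rewrite /frob; suff -> : \max_(n < nsg_c S | ~~ S n) n.+1 = F.+1 by lia.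
apply/eqP; rewrite eqn_leq; apply/andP; split.
  by apply/bigmax_leqP => i /gap_le_F.
exact: (@leq_bigmax_cond _ (fun n : 'I_(nsg_c S) => ~~ S n) (fun n => n.+1) (Ordinal lt_Fc)).
Qed.

Lemma memZ_dualE (z : int) :
  (memZ S z != memZ S (F%:Z - z)%R) =
  if z is Posz n then (n <= F) ==> (S n != S (F - n)) else true.
Proof.
case: z => n /=.
  have [le_nF|lt_Fn] := leqP n F; first by rewrite subzn.
  by rewrite /memZ /= mem_gt_F //; have -> : (0 <= F%:Z - n%:Z)%R = false by lia.
have -> : (F%:Z - Negz n = (F + n.+1)%:Z)%R by rewrite NegzE opprK PoszD.
by rewrite /memZ /= mem_gt_F //; lia.
Qed.

Lemma symmetric_nsgP :
  symmetric_nsg S <-> forall n, n <= F -> S n != S (F - n).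
Proof.
rewrite /symmetric_nsg frobE; split=> [sym n le_nF|dual [n|n]].
- by have := sym n; rewrite memZ_dualE le_nF.
- by rewrite memZ_dualE; apply/implyP/dual.
- by rewrite memZ_dualE.
Qed.

Lemma pseudo_symmetric_nsgP :
  pseudo_symmetric_nsg S <->
  ~~ odd F /\ forall n, n <= F -> n.*2 != F -> S n != S (F - n).
Proof.
rewrite /pseudo_symmetric_nsg frobE divz_nat -dvdn2.
have halfE n : 2 %| F -> (n.*2 != F) = (n%:Z != (F %/ 2)%:Z)%R.
  by move=> evenF; apply/idP/idP; apply: contra => /eqP; lia.
split=> -[evenF dual]; split=> //.
- by move=> n le_nF; rewrite halfE //; have := dual n; rewrite memZ_dualE le_nF.
- case=> n ne_half; rewrite memZ_dualE //.
  by apply/implyP => le_nF; rewrite dual // halfE.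
Qed.

Lemma mem_F_proper_sup (T : numsg) :
  (forall n, n <= F -> n.*2 != F -> S n != S (F - n)) -> Defs.proper_sub S T -> T F.
Proof.
move=> dual [subST [h /andP[Th nSh]]]; have le_hF := gap_le_F nSh.
have [<-|ne_hF] := eqVneq h.*2 F; first by rewrite -addnn nsg_add.
have := dual h le_hF ne_hF; rewrite (negbTE nSh) negbK => SFh.
by rewrite -(subnKC le_hF) nsg_add // subST.
Qed.

(* A proper oversemigroup of S must contain F, so two of them cannot meet in S. *)
Lemma irreducible_of_dual :
  (forall n, n <= F -> n.*2 != F -> S n != S (F - n)) -> irreducible_nsg S.
Proof.
move=> dual [T1 [T2 [subT1 subT2 meetS]]]; move: gap_F.
by rewrite meetS !(mem_F_proper_sup dual).
Qed.

Lemma not_irreducible_adjoin h :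
  ~~ S h -> h != F -> (forall s, S s -> 0 < s -> S (h + s)) -> S (h + h) ->
  ~ irreducible_nsg S.
Proof.
move=> nSh ne_hF add_h double_h; apply.
have F_gt0 : 0 < F by case: posnP gap_F => // ->; rewrite nsg_0.
have add_F s : S s -> 0 < s -> S (F + s) by move=> _ s_gt0; apply: mem_gt_F; lia.
have double_F : S (F + F) by apply: mem_gt_F; lia.
exists (nsg_adjoin add_F double_F), (nsg_adjoin add_h double_h); split.
- exact: proper_sub_adjoin.
- exact: proper_sub_adjoin.
- move=> n; rewrite /= /adjoin_pred; case: (S n) => //=.
  by apply/esym/negP => /andP[/eqP-> /eqP eFh]; rewrite eFh eqxx in ne_hF.
Qed.

End Frobenius.

Definition reflective_pred (a g : nat) : pred nat :=
  fun x => if x < g then a %| x else if x < g.*2 then ~~ (a %| x - g) else true.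

Section Reflective.
Variable S : numsg.
Hypothesis reflS : reflective_nsg S.
Local Notation g := (genus S).
Local Notation a := (mult S).

Lemma mem_add_genus z : z < g -> S (z + g) = ~~ S z.
Proof. by case: reflS => _ dual_g /dual_g; case: (S z); case: (S (z + g)). Qed.

Lemma gap_genus : ~~ S g.
Proof. by have := mem_add_genus reflS.1; rewrite add0n nsg_0 => ->. Qed.

(* A non-multiple x of a below g would make x - a a gap, so x + g = (x - a + g) + a
   would lie in S, contradicting reflectivity at x. *)
Lemma mem_lt_genus x : x < g -> S x = (a %| x).
Proof.
elim/ltn_ind: x => x IHx lt_xg; apply/idP/idP; last exact: mem_dvd_mult.
move=> Sx; have [->|x_gt0] := posnP x; first exact: dvdn0.
have le_ax := mult_min x_gt0 Sx; have a_gt0 := mult_gt0 S.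
apply: contraT => ndvd_ax.
have S_xa : ~~ S (x - a).
  apply: contra ndvd_ax; rewrite IHx; [|lia|lia].
  by move=> dvd_a; rewrite -(subnK le_ax) dvdn_add.
have := mem_add_genus lt_xg; rewrite Sx /=.
have -> : x + g = (x - a + g) + a by lia.
by rewrite nsg_add ?mem_mult ?mem_add_genus //; lia.
Qed.

Lemma mem_lt_double_genus x : g <= x < g.*2 -> S x = ~~ (a %| x - g).
Proof.
case/andP=> le_gx lt_x2g.
by rewrite -mem_lt_genus -?mem_add_genus ?subnK //; lia.
Qed.

(* The gaps below 2g already number g: on [g, 2g) the gaps mirror the elements of [0, g). *)
Lemma mem_ge_double_genus x : g.*2 <= x -> S x.
Proof.
move=> le_2gx; apply: contraT => nSx.
have lt_xc : x < nsg_c S by rewrite ltnNge; apply: contra nSx; apply: nsg_cofin.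
have : g = count (predC S) (iota 0 (nsg_c S)) by [].
have -> : nsg_c S = g + g + (nsg_c S - g.*2) by lia.
rewrite !iotaD !count_cat !add0n.
have -> : count (predC S) (iota g g) = count S (iota 0 g).
  rewrite -[X in iota X _]addn0 iotaDl count_map.
  apply: eq_in_count => z; rewrite mem_iota => /andP[_ lt_zg].
  by rewrite /= addnC mem_add_genus // negbK.
rewrite [count (predC S) _ + _]addnC count_predC size_iota.
have : 0 < count (predC S) (iota (g + g) (nsg_c S - g.*2)).
  by rewrite -has_count; apply/hasP; exists x => //; rewrite mem_iota; lia.
lia.
Qed.

Lemma reflective_nsgE : S =1 reflective_pred a g.
Proof.
move=> x; rewrite /reflective_pred.
have [lt_xg|le_gx] := ltnP x g; first exact: mem_lt_genus.
have [lt_x2g|le_2gx] := ltnP x g.*2; last exact: mem_ge_double_genus.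
by apply: mem_lt_double_genus; rewrite le_gx.
Qed.

Lemma mult_ndvd_genus : ~~ (a %| g).
Proof. by apply: contra gap_genus; apply: mem_dvd_mult. Qed.

Lemma mult_gt1 : 1 < a.
Proof. by case: a (mult_gt0 S) mult_ndvd_genus => [|[|]] //; rewrite dvd1n. Qed.

End Reflective.

Section ReflectivePred.
Variables (S : numsg) (a k r : nat).
Hypotheses (a_gt1 : 1 < a) (r_lt_a : r < a).
Hypothesis memS : S =1 reflective_pred a (k * a + r).+1.
Local Notation g := (k * a + r).+1.
Local Notation F := (g + k * a).

Lemma gap_F : ~~ S F.
Proof.
rewrite memS /reflective_pred; have -> : (F < g) = false by lia.
have -> : F < g.*2 by lia.
by rewrite addKn negbK dvdn_mull.
Qed.

Lemma gap_le_F n : ~~ S n -> n <= F.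
Proof.
rewrite memS /reflective_pred; case: ltnP => [lt_ng _|le_gn]; first lia.
case: ltnP => // lt_n2g; rewrite negbK => /dvdnP[q eq_nq].
have a_gt0 : 0 < a by lia.
have le_qk : q <= k by rewrite -ltnS -(ltn_pmul2r a_gt0); lia.
have : q * a <= k * a by rewrite leq_pmul2r.
lia.
Qed.

Lemma middle_gap n : k * a < n < g -> ~~ S n.
Proof.
rewrite memS /reflective_pred => /andP[lt_kan lt_ng]; rewrite lt_ng.
have -> : n = k * a + (n - k * a) by lia.
by rewrite dvdn_addr ?dvdn_mull // gtnNdvd //; lia.
Qed.

Lemma mem_dual n : n <= F -> ~~ (k * a < n < g) -> S n != S (F - n).
Proof.
have low m : m <= k * a -> S m != S (F - m).
  move=> le_mka; rewrite !memS /reflective_pred.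
  have -> : m < g by lia.
  have -> : (F - m < g) = false by lia.
  have -> : F - m < g.*2 by lia.
  have -> : F - m - g = k * a - m by lia.
  by rewrite dvdn_subr ?dvdn_mull //; case: (a %| m).
move=> le_nF; rewrite negb_and -!leqNgt => /orP[le_nka|le_gn]; first exact: low.
by rewrite eq_sym; have := low (F - n); rewrite subKn //; apply; lia.
Qed.

Lemma middle_gap_pair : 0 < r -> S g.-1 = S (F - g.-1).
Proof. by move=> r_gt0; rewrite !(negbTE (middle_gap _)) //; lia. Qed.

Lemma odd_F : odd F = ~~ odd r.
Proof. by rewrite (_ : F = (k * a).*2 + r.+1) ?oddD ?odd_double //; lia. Qed.

Lemma symmetric_nsg_iff : symmetric_nsg S <-> r = 0.
Proof.
rewrite (symmetric_nsgP gap_F gap_le_F); split=> [dual|r0 n le_nF].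
- apply/eqP; apply: contraT => r_neq0.
  by have := dual g.-1; rewrite middle_gap_pair ?eqxx //; lia.
- by apply: mem_dual => //; lia.
Qed.

Lemma pseudo_symmetric_nsg_iff : pseudo_symmetric_nsg S <-> r = 1.
Proof.
rewrite (pseudo_symmetric_nsgP gap_F gap_le_F) odd_F negbK.
split=> [[odd_r dual]|r1].
- have r_gt0 : 0 < r by case: r odd_r.
  apply/eqP; apply: contraT => r_neq1.
  by have := dual g.-1; rewrite middle_gap_pair ?eqxx //; lia.
- split=> [|n le_nF ne_half]; first by rewrite r1.
  by apply: mem_dual => //; lia.
Qed.

Lemma add_pred_genus s : S s -> 0 < s -> S (g.-1 + s).
Proof.
move=> Ss s_gt0; have [lt_sg|le_gs] := ltnP s g.
- move: Ss; rewrite !memS /reflective_pred lt_sg.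
  have -> : (g.-1 + s < g) = false by lia.
  have -> : g.-1 + s < g.*2 by lia.
  apply: contraL => dvd_a; have -> : s = (g.-1 + s - g) + 1 by lia.
  by rewrite dvdn_addr // dvdn1; lia.
- have gap_g : ~~ S g.
    rewrite memS /reflective_pred ltnn; have -> : g < g.*2 by lia.
    by rewrite subnn dvdn0.
  have lt_gs : g < s by rewrite ltn_neqAle le_gs andbT; apply: contraTneq Ss => <-.
  rewrite memS /reflective_pred; have -> : (g.-1 + s < g) = false by lia.
  by have -> : (g.-1 + s < g.*2) = false by lia.
Qed.

Lemma double_pred_genus : 1 < r -> S (g.-1 + g.-1).
Proof.
move=> r_gt1; rewrite memS /reflective_pred.
have -> : (g.-1 + g.-1 < g) = false by lia.
have -> : g.-1 + g.-1 < g.*2 by lia.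
have -> : g.-1 + g.-1 - g = k * a + r.-1 by lia.
by rewrite dvdn_addr ?dvdn_mull // gtnNdvd //; lia.
Qed.

Lemma irreducible_nsg_iff : irreducible_nsg S <-> r <= 1.
Proof.
split=> [irr|le_r1].
- rewrite leqNgt; apply/negP => r_gt1.
  apply: (not_irreducible_adjoin gap_F gap_le_F (h := g.-1)) irr.
  + by apply: middle_gap; lia.
  + by apply/eqP; lia.
  + exact: add_pred_genus.
  + exact: double_pred_genus.
- apply: (irreducible_of_dual gap_F gap_le_F) => n le_nF ne_half.
  by apply: mem_dual => //; lia.
Qed.

End ReflectivePred.

Theorem mainTheorem8 (S : numsg) :
  reflective_nsg S ->
  [/\ symmetric_nsg S <-> genus S = 1 %[mod mult S],
      pseudo_symmetric_nsg S <-> genus S = 2 %[mod mult S]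
    & irreducible_nsg S <-> (genus S = 1 %[mod mult S] \/ genus S = 2 %[mod mult S])].
Proof.
move=> reflS; have a_gt1 := mult_gt1 reflS; have [g_gt0 _] := reflS.
pose k := (genus S).-1 %/ mult S; pose r := (genus S).-1 %% mult S.
have g_eq : genus S = (k * mult S + r).+1 by rewrite /k /r -divn_eq; lia.
have r_lt_a : r < mult S by rewrite ltn_pmod //; lia.
have r1_lt_a : r.+1 < mult S.
  rewrite ltn_neqAle r_lt_a andbT; apply: contraNneq (mult_ndvd_genus reflS) => a_eq.
  by rewrite g_eq -addnS a_eq dvdn_addr ?dvdn_mull.
have memS := reflective_nsgE reflS; rewrite g_eq in memS.
have modE n : genus S = n %[mod mult S] <-> r.+1 = n %% mult S.
  by rewrite g_eq -addnS modnMDl modn_small.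
have mod1 : genus S = 1 %[mod mult S] <-> r = 0 by rewrite modE modn_small //; lia.
have mod2 : genus S = 2 %[mod mult S] <-> r = 1.
  rewrite modE; have [a_eq2|a_gt2] : mult S = 2 \/ 2 < mult S by lia.
  - by rewrite a_eq2 modnn; lia.
  - by rewrite modn_small //; lia.
split; rewrite ?mod1 ?mod2.
- exact: symmetric_nsg_iff memS.
- exact: pseudo_symmetric_nsg_iff memS.
- by rewrite (irreducible_nsg_iff a_gt1 r_lt_a memS); lia.
Qed.
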